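(* Let $\rho_{ab}$ be a two-qubit state (density matrix on $\mathbb{C}^2\otimes\mathbb{C}^2$), with entries $\rho_{ij}$ in the product computational basis $\{|00\rangle,|01\rangle,|10\rangle,|11\rangle\}$ indexed by $i,j\in\{1,2,3,4\}$. Suppose one can choose arguments $\theta_{ij}\in[0,2\pi]$ of the entries ($\rho_{ij}=|\rho_{ij}|e^{\mathfrak{i}\theta_{ij}}$, arbitrary when $\rho_{ij}=0$) such that for all $i,k,j$ there is an integer $n$ with $\theta_{ik}+\theta_{kj}=2n\pi+\theta_{ij}$. Let $\rho_a=\mathrm{Tr}_b\rho_{ab}$ and $\rho_b=\mathrm{Tr}_a\rho_{ab}$. Then $$F_c(\rho_a)+F_c(\rho_b)\le 2F_c(\rho_{ab})+\frac12.$$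
   Context: Coherence is taken with respect to the computational (product) basis. For a single qubit, the maximally coherent states are $\mathcal{M}=\{\frac{1}{\sqrt2}(e^{\mathfrak{i}\theta_0}|0\rangle+e^{\mathfrak{i}\theta_1}|1\rangle):\theta_0,\theta_1\in[0,2\pi]\}$ and $F_c(\sigma)=\max_{|\phi\rangle\in\mathcal{M}}\langle\phi|\sigma|\phi\rangle$. For two qubits, the bipartite maximally coherent states are $\mathcal{M}_2=\{\frac12\sum_{k,l=0}^{1}e^{\mathfrak{i}\theta_{kl}}|kl\rangle:\theta_{kl}\in[0,2\pi]\}$ and the (global) coherence fraction is $F_c(\rho_{ab})=\max_{|\phi\rangle\in\mathcal{M}_2}\langle\phi|\rho_{ab}|\phi\rangle$. *)

From HB Require Import structures.
From mathcomp Require Import all_boot all_order all_algebra.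
From mathcomp Require Import all_classical all_reals all_analysis.
From mathcomp Require Import complex.
Set Implicit Arguments. Unset Strict Implicit. Unset Printing Implicit Defensive.
Import Order.TTheory GRing.Theory Num.Theory.
Local Open Scope ring_scope.
Local Open Scope classical_set_scope.

Definition expi (R : realType) (t : R) : R[i] := (cos t +i* sin t)%C.

Definition adj (R : realType) m n (A : 'M[R[i]]_(m, n)) : 'M[R[i]]_(n, m) :=
  \matrix_(i, j) (A j i)^*.

Definition density (R : realType) n (rho : 'M[R[i]]_n) : Prop :=
  adj rho = rho /\
  (forall v : 'cV[R[i]]_n, 0 <= (adj v *m rho *m v) ord0 ord0) /\
  \tr rho = 1.

(* product computational basis: |kl> has index 2k+l in 'I_4,
   i.e. |00>,|01>,|10>,|11> = 0,1,2,3 (the paper's 1,2,3,4) *)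
Definition idx2 (k l : 'I_2) : 'I_4 := inord (2 * k + l).

Definition ptrace_b (R : realType) (rho : 'M[R[i]]_4) : 'M[R[i]]_2 :=
  \matrix_(k, k') \sum_(l < 2) rho (idx2 k l) (idx2 k' l).
Definition ptrace_a (R : realType) (rho : 'M[R[i]]_4) : 'M[R[i]]_2 :=
  \matrix_(l, l') \sum_(k < 2) rho (idx2 k l) (idx2 k l').

(* <phi|sigma|phi> for |phi> = (1/sqrt n) sum_k e^{i th_k} |k> *)
Definition coh_val (R : realType) n (sigma : 'M[R[i]]_n) (th : 'I_n -> R) : R[i] :=
  (n%:R)^-1 * \sum_(k < n) \sum_(k' < n) (expi (th k))^* * sigma k k' * expi (th k').

(* coherence fraction: max over maximally coherent states, phases in [0,2pi]
   (the value is real for Hermitian sigma; we take the real part). The set is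
   compact so sup = max. *)
Definition Fc (R : realType) n (sigma : 'M[R[i]]_n) : R :=
  sup [set x : R | exists th : 'I_n -> R,
         (forall k, 0 <= th k <= 2 * pi) /\ x = complex.Re (coh_val sigma th)].

(* If the phases of rho form a cocycle, the maximally coherent state with
   phases th k := theta k 0 is aligned with every entry of rho, so F_c(rho)
   attains the trivial upper bound (1/4) sum_{i,j} |rho_ij|.  For a qubit
   state sigma, F_c(sigma) <= (1 + |sigma_01| + |sigma_10|) / 2, and the
   off-diagonal entries of the two reduced states are sums of eight distinct
   off-diagonal entries of rho.  The diagonal of rho contributes at least its
   trace 1 to the sum of moduli, and the four entries rho_03, rho_12, rho_21,
   rho_30 contribute nonnegative amounts, which gives the bound. *)

From HB Require Import structures.
From mathcomp Require Import all_boot all_order all_algebra.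
From mathcomp Require Import all_classical all_reals all_analysis.
From mathcomp Require Import complex.
From mathcomp Require Import ring lra.
Import Order.TTheory GRing.Theory Num.Theory.
Local Open Scope ring_scope.

Local Notation normc := Normc.normc.

Lemma periodicz {U V : zmodType} {f : U -> V} {T : U} :
  periodic f T -> forall (m : int) a, f (a + T *~ m) = f a.
Proof.
move=> fT [] n a; first exact: periodicn.
by rewrite -(periodicn fT n.+1) NegzE mulrNz addrNK.
Qed.

Lemma sum_ord2 (V : nmodType) (F : 'I_2 -> V) :
  \sum_(i < 2) F i = F (inord 0) + F (inord 1).
Proof.
rewrite !big_ord_recr big_ord0 /= add0r.
by congr (_ + _); congr F; apply/val_inj; rewrite /= inordK.
Qed.

Lemma sum_ord4 (V : nmodType) (F : 'I_4 -> V) :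
  \sum_(i < 4) F i = F (inord 0) + F (inord 1) + F (inord 2) + F (inord 3).
Proof.
rewrite !big_ord_recr big_ord0 /= add0r.
by congr (_ + _ + _ + _); congr F; apply/val_inj; rewrite /= inordK.
Qed.

Section ComplexFacts.
Context {R : realType}.
Implicit Types (z : R[i]) (t u : R).

Lemma normc_ge0 z : 0 <= normc z.
Proof. by case: z => a b; rewrite sqrtr_ge0. Qed.

Lemma Re_le_normc z : complex.Re z <= normc z.
Proof.
case: z => a b /=; apply: le_trans (ler_norm a) _.
by rewrite -sqrtr_sqr ler_wsqrtr // lerDl sqr_ge0.
Qed.

Lemma normc_conj z : normc z^* = normc z.
Proof. by case: z => a b /=; rewrite sqrrN. Qed.

Lemma normc_expi t : normc (expi t) = 1.
Proof. by rewrite /= cos2Dsin2 sqrtr1. Qed.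

Lemma normc_expi_conj_mul t u z : normc ((expi t)^* * z * expi u) = normc z.
Proof. by rewrite !Normc.normcM normc_conj !normc_expi mul1r mulr1. Qed.

Lemma Re_realC_mul t z : complex.Re (t%:C%C * z) = t * complex.Re z.
Proof. by case: z => a b /=; rewrite mul0r subr0. Qed.

Lemma expiD t u : expi (t + u) = expi t * expi u.
Proof. by rewrite /expi cosD sinD /=; congr (_ +i* _)%C; rewrite addrC. Qed.

Lemma conj_expi t : (expi t)^* = expi (- t).
Proof. by rewrite /expi /= cosN sinN. Qed.

Lemma conj_expiK t z : (expi t)^* * z * expi t = z.
Proof. by rewrite mulrAC conj_expi -expiD addNr /expi cos0 sin0 mul1r. Qed.

Lemma expiD2pi : periodic (@expi R) (pi *+ 2).
Proof. by move=> t; rewrite /expi cosD2pi sinD2pi. Qed.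

Lemma expi_2piz (m : int) t : expi (2 * m%:~R * pi + t) = expi t.
Proof.
rewrite -(periodicz expiD2pi m t); congr expi.
by rewrite -mulrzr -mulrzl mulrzAl; ring.
Qed.

End ComplexFacts.

Section CoherenceFraction.
Context {R : realType} {n : nat} (s : 'M[R[i]]_n).
Implicit Types th : 'I_n -> R.

Definition phase_aligned th :=
  forall k k', s k k' * expi (th k') = `|s k k'| * expi (th k).

Lemma cocycle_phase_aligned (theta : 'I_n -> 'I_n -> R) (k0 : 'I_n) :
  (forall i j, s i j = `|s i j| * expi (theta i j)) ->
  (forall i k j, exists m : int, theta i k + theta k j = 2 * m%:~R * pi + theta i j) ->
  phase_aligned (fun k => theta k k0).
Proof.
move=> polar cocycle k k'; have [m cocycle_m] := cocycle k k' k0.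
by rewrite {1}polar -mulrA -expiD cocycle_m expi_2piz.
Qed.

Lemma Re_coh_valE th :
  complex.Re (coh_val s th) = n%:R^-1 *
    \sum_(k < n) \sum_(k' < n) complex.Re ((expi (th k))^* * s k k' * expi (th k')).
Proof.
rewrite /coh_val -(rmorph_nat (real_complex R)) -fmorphV Re_realC_mul.
by rewrite raddf_sum; congr (_ * _); apply: eq_bigr => k _; rewrite raddf_sum.
Qed.

Lemma Re_coh_val_le th :
  complex.Re (coh_val s th) <= n%:R^-1 * \sum_(k < n) \sum_(k' < n) normc (s k k').
Proof.
rewrite Re_coh_valE ler_wpM2l ?invr_ge0 ?ler0n //.
apply: ler_sum => k _; apply: ler_sum => k' _.
by rewrite -(normc_expi_conj_mul (th k) (th k')) Re_le_normc.
Qed.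

Lemma Re_coh_val_aligned th : phase_aligned th ->
  complex.Re (coh_val s th) = n%:R^-1 * \sum_(k < n) \sum_(k' < n) normc (s k k').
Proof.
move=> aligned; rewrite Re_coh_valE; congr (_ * _).
apply: eq_bigr => k _; apply: eq_bigr => k' _.
by rewrite -mulrA aligned mulrA conj_expiK.
Qed.

Lemma Fc_le_ub (b : R) : (forall th, complex.Re (coh_val s th) <= b) -> Fc s <= b.
Proof.
move=> ub; apply: ge_sup; last by move=> _ [th [_ ->]].
exists (complex.Re (coh_val s (fun=> 0))), (fun=> 0); split=> // _.
by rewrite lexx mulr_ge0 ?pi_ge0.
Qed.

Lemma Re_coh_val_le_Fc th : (forall k, 0 <= th k <= 2 * pi) ->
  complex.Re (coh_val s th) <= Fc s.
Proof.
move=> th_range; apply: ub_le_sup; last by exists th.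
by exists (n%:R^-1 * \sum_(k < n) \sum_(k' < n) normc (s k k')) => _ [th' [_ ->]];
  exact: Re_coh_val_le.
Qed.

Lemma norm_sum_le_Fc th : (forall k, 0 <= th k <= 2 * pi) -> phase_aligned th ->
  n%:R^-1 * \sum_(k < n) \sum_(k' < n) normc (s k k') <= Fc s.
Proof. by move=> th_range /Re_coh_val_aligned <-; exact: Re_coh_val_le_Fc. Qed.

Lemma Re_mxtrace_le : complex.Re (\tr s) <= \sum_(k < n) normc (s k k).
Proof. by rewrite raddf_sum; apply: ler_sum => k _; exact: Re_le_normc. Qed.

End CoherenceFraction.

Section TwoQubits.
Context {R : realType}.

Lemma Fc_qubit_le (s : 'M[R[i]]_2) :
  Fc s <= 2^-1 * (complex.Re (\tr s)
                  + normc (s (inord 0) (inord 1)) + normc (s (inord 1) (inord 0))).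
Proof.
apply: Fc_le_ub => th; rewrite Re_coh_valE /mxtrace !sum_ord2 !conj_expiK !raddfD.
have := Re_le_normc ((expi (th (inord 0)))^* * s (inord 0) (inord 1) * expi (th (inord 1))).
have := Re_le_normc ((expi (th (inord 1)))^* * s (inord 1) (inord 0) * expi (th (inord 0))).
rewrite !normc_expi_conj_mul; lra.
Qed.

Variable rho : 'M[R[i]]_4.

Lemma mxtrace_ptrace_b : \tr (ptrace_b rho) = \tr rho.
Proof. by rewrite /mxtrace sum_ord4 sum_ord2 !mxE !sum_ord2 /idx2 !inordK // addrA. Qed.

Lemma mxtrace_ptrace_a : \tr (ptrace_a rho) = \tr rho.
Proof.
rewrite -mxtrace_ptrace_b /mxtrace.
under eq_bigr do rewrite mxE.
by rewrite exchange_big; apply: eq_bigr => k _; rewrite mxE.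
Qed.

Lemma Fc_ptrace_b_le :
  Fc (ptrace_b rho) <= 2^-1 * (complex.Re (\tr rho)
    + normc (rho (inord 0) (inord 2)) + normc (rho (inord 1) (inord 3))
    + normc (rho (inord 2) (inord 0)) + normc (rho (inord 3) (inord 1))).
Proof.
have ptrace_b01 : ptrace_b rho (inord 0) (inord 1)
    = rho (inord 0) (inord 2) + rho (inord 1) (inord 3).
  by rewrite mxE sum_ord2 /idx2 !inordK.
have ptrace_b10 : ptrace_b rho (inord 1) (inord 0)
    = rho (inord 2) (inord 0) + rho (inord 3) (inord 1).
  by rewrite mxE sum_ord2 /idx2 !inordK.
apply: le_trans (Fc_qubit_le _) _.
rewrite mxtrace_ptrace_b ptrace_b01 ptrace_b10.
have := le_normcD (rho (inord 0) (inord 2)) (rho (inord 1) (inord 3)).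
have := le_normcD (rho (inord 2) (inord 0)) (rho (inord 3) (inord 1)).
lra.
Qed.

Lemma Fc_ptrace_a_le :
  Fc (ptrace_a rho) <= 2^-1 * (complex.Re (\tr rho)
    + normc (rho (inord 0) (inord 1)) + normc (rho (inord 2) (inord 3))
    + normc (rho (inord 1) (inord 0)) + normc (rho (inord 3) (inord 2))).
Proof.
have ptrace_a01 : ptrace_a rho (inord 0) (inord 1)
    = rho (inord 0) (inord 1) + rho (inord 2) (inord 3).
  by rewrite mxE sum_ord2 /idx2 !inordK.
have ptrace_a10 : ptrace_a rho (inord 1) (inord 0)
    = rho (inord 1) (inord 0) + rho (inord 3) (inord 2).
  by rewrite mxE sum_ord2 /idx2 !inordK.
apply: le_trans (Fc_qubit_le _) _.
rewrite mxtrace_ptrace_a ptrace_a01 ptrace_a10.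
have := le_normcD (rho (inord 0) (inord 1)) (rho (inord 2) (inord 3)).
have := le_normcD (rho (inord 1) (inord 0)) (rho (inord 3) (inord 2)).
lra.
Qed.

End TwoQubits.

Theorem theorem5 (R : realType) (rho : 'M[R[i]]_4) :
  density rho ->
  (exists theta : 'I_4 -> 'I_4 -> R,
     (forall i j, 0 <= theta i j <= 2 * pi) /\
     (forall i j, rho i j = `|rho i j| * expi (theta i j)) /\
     (forall i k j, exists n : int,
        theta i k + theta k j = 2 * n%:~R * pi + theta i j)) ->
  Fc (ptrace_b rho) + Fc (ptrace_a rho) <= 2 * Fc rho + 2^-1.
Proof.
move=> [_ [_ tr_rho]] [theta [theta_range [polar cocycle]]].
have := norm_sum_le_Fc rho _ (fun k => theta_range k 0)
  (cocycle_phase_aligned rho _ 0 polar cocycle).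
have := Re_mxtrace_le rho.
have := Fc_ptrace_b_le rho; have := Fc_ptrace_a_le rho.
rewrite tr_rho !sum_ord4 /=.
have := normc_ge0 (rho (inord 0) (inord 3)); have := normc_ge0 (rho (inord 3) (inord 0)).
have := normc_ge0 (rho (inord 1) (inord 2)); have := normc_ge0 (rho (inord 2) (inord 1)).
lra.
Qed.
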